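(* Let $F=\sum_{i=0}^df_iX^i$ and $G=\sum_{i=0}^dg_iX^i$ be polynomials in $\mathbb C[X]$ with $\deg F=d\ge1$, $\deg G\le d$, and $v(F)=v(G)$. Write the expansion of $G/F$ around $0$ as $G/F=v+\sum_{i\ge1}v_iX^i$ and its expansion around infinity as $G/F=-u-\sum_{i\ge1}u_iX^{-i}$. For $k\ge1$ let $\mathcal T_k(F,G)=(t_{i,j})_{1\le i,j\le k}$ be the Toeplitz matrix with $t_{i,j}=v_{j-i}$ if $i<j$, $t_{i,j}=u_{i-j}$ if $i>j$, and $t_{i,i}=u+v$. Let $(S_j)_{-1\le j\le d}$ be the symmetric subresultants with $S_{-1}=F$, $S_0=G$. Then for every $k=1,\dots,d$, $$S_k(0)=(-1)^k f_0^k f_d^k\det\big(\mathcal T_k(F,G)\big).$$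
   Context: For a nonzero polynomial $P$, $v(P)$ is the largest $v$ with $X^v\mid P$. The expansion around $0$ is in formal power series $\mathbb C[[X]]$, the expansion around infinity is in formal Laurent series in $X^{-1}$. Symmetric subresultants: for $A=\sum_{i=0}^d a_iX^i$, $B=\sum_{i=0}^d b_iX^i$ with $\deg A=d\ge1$ ($B$ of formal degree $d$), put $a_i=b_i=0$ for $i<0$ or $i>d$; for $1\le j\le d$, $0\le\ell\le d-j$, $\mathrm{Sylv}_{j,\ell}$ is the $2j\times2j$ matrix whose $r$-th row ($1\le r\le j$) is $(a_{1-r},\dots,a_{j-1-r},\ a_{j-r+\ell},\ a_{d+1-r},\dots,a_{d+j-r})$ and whose $(j+r)$-th row is the same with $b$ in place of $a$; $S_{-1}=A$, $S_0=B$, $S_j=\sum_{\ell=0}^{d-j}\det(\mathrm{Sylv}_{j,\ell})X^\ell$ for $1\le j\le d$. Here $A=F$, $B=G$. *)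

From HB Require Import structures.
From mathcomp Require Import all_boot all_order all_algebra.
From mathcomp Require Import reals complex.
Set Implicit Arguments. Unset Strict Implicit. Unset Printing Implicit Defensive.
Import Order.TTheory GRing.Theory Num.Theory.
Local Open Scope ring_scope.

Section Defs.
Variable K : fieldType.

(* v(P): the largest v with X^v | P (meaningful for P != 0; for P != 0,
   X^v | P forces v < size P, so the max over v < size P is the true max). *)
Definition pval (P : {poly K}) : nat := (\max_(i < size P | ('X^i %| P)%R) i)%N.

Definition coefz (P : {poly K}) (z : int) : K :=
  match z with Posz n => P`_n | Negz _ => 0 end.

(* s : nat -> K is the expansion of G/F around 0 in K[[X]], i.e.
   F * (sum_n s n X^n) = G in K[[X]] (coefficientwise). *)
Definition expansion0 (F G : {poly K}) (s : nat -> K) : Prop :=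
  forall n : nat, \sum_(j < n.+1) F`_j * s (n - j)%N = G`_n.

(* w : nat -> K is the expansion of G/F around infinity as a Laurent series
   in X^-1, i.e. F(X) * (sum_{i>=0} w i X^-i) = G(X), compared coefficientwise
   (coefficients of X^k for k > d are 0 on both sides since deg G <= d). *)
Definition expansion_inf (F G : {poly K}) (w : nat -> K) : Prop :=
  (forall k : nat, (k < size F)%N ->
      \sum_(k <= j < size F) F`_j * w (j - k)%N = G`_k)
  /\ (forall k : nat, (0 < k)%N ->
      \sum_(j < size F) F`_j * w (j + k)%N = 0).

(* The Toeplitz matrix T_k(F,G) (0-indexed): with v = s 0, v_i = s i,
   u = - w 0, u_i = - w i. *)
Definition toeplitzFG (s w : nat -> K) (k : nat) : 'M[K]_k :=
  \matrix_(i < k, j < k)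
    if (i < j)%N then s (j - i)%N
    else if (j < i)%N then - w (i - j)%N
    else (- w 0%N) + s 0%N.

(* Sylv_{j,l}(A,B) for formal degree d, 0-indexed rows/columns in 'I_(j+j).
   Row r (1-indexed, r <= j) = (a_{1-r},..,a_{j-1-r}, a_{j-r+l},
   a_{d+1-r},..,a_{d+j-r}); rows j+r: the same with b. *)
Definition sylv (A B : {poly K}) (d j l : nat) : 'M[K]_(j + j) :=
  \matrix_(r < j + j, c < j + j)
    let P := if (r < j)%N then A else B in
    let r' : int := Posz (if (r < j)%N then (r : nat) else (r - j)%N) in
    if (c.+1 < j)%N then coefz P (c%:Z - r')
    else if c == j.-1 :> nat then coefz P (j%:Z - 1 - r' + l%:Z)
    else coefz P (d%:Z + c%:Z - j%:Z - r').

Definition subres (A B : {poly K}) (d j : nat) : {poly K} :=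
  \sum_(l < (d - j).+1) (\det (sylv A B d j l)) *: 'X^l.

End Defs.

From HB Require Import structures.
From mathcomp Require Import all_boot all_order all_algebra.
From mathcomp Require Import reals complex.
From mathcomp Require Import zify ring.
Set Implicit Arguments. Unset Strict Implicit. Unset Printing Implicit Defensive.
Import Order.TTheory GRing.Theory Num.Theory.
Local Open Scope ring_scope.

(* For l = 0 the columns of Sylv_{k,0}(F,G) are a_{c-r} for c < k and
   a_{d+c-r} for c >= k, so Sylv_{k,0} = [[L_F, H_F], [L_G, H_G]] with
   L_P upper triangular Toeplitz in the low coefficients of P and H_P lower
   triangular in its top coefficients.  The expansions of G/F at 0 and at
   infinity say exactly L_G = L_s L_F and H_G = H_w H_F, with L_s, H_w the
   triangular Toeplitz matrices of the two series, so
     det Sylv_{k,0} = det L_F * det H_F * det (H_w - L_s)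
   and H_w - L_s = - T_k(F,G). *)

Section SchurComplement.
Variable R : comNzRingType.

Lemma det_block_mulmx n (A B C D : 'M[R]_n) :
  \det (block_mx A B (C *m A) (D *m B)) = \det A * \det B * \det (D - C).
Proof.
have -> : block_mx A B (C *m A) (D *m B) =
    block_mx 1%:M 0 C 1%:M *m block_mx A B 0 ((D - C) *m B).
  rewrite mulmx_block !mul1mx ?mul0mx ?addr0 ?mulmx0 ?add0r ?mul1mx mulmxBl.
  by rewrite addrC subrK.
by rewrite det_mulmx det_lblock det_ublock det_mulmx !det1 mul1r; ring.
Qed.

End SchurComplement.

Section SylvesterMatrix.
Variable K : fieldType.

Lemma coefz_subn (P : {poly K}) (x y : nat) :
  coefz P (x%:Z - y%:Z) = if (y <= x)%N then P`_(x - y) else 0.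
Proof.
case: leqP => yx; first by rewrite subzn.
by have -> : x%:Z - y%:Z = Negz (y - x).-1 by rewrite NegzE; lia.
Qed.

Lemma sum_ord_window (f : nat -> K) (k r c : nat) : (r <= c < k)%N ->
  \sum_(t < k) (if (r <= t <= c)%N then f t else 0) =
  \sum_(j < (c - r).+1) f (r + j)%N.
Proof.
move=> /andP[rc ck].
have rk : (r <= k)%N by apply: leq_trans (ltnW ck).
rewrite -(big_mkord xpredT (fun t => if (r <= t <= c)%N then f t else 0)).
rewrite (big_cat_nat (leq0n r) rk) /= big1_seq ?add0r; last first.
  by move=> t; rewrite mem_index_iota /= => tr; rewrite leqNgt tr.
rewrite (big_cat_nat (leqW rc) ck) /= [X in _ + X]big1_seq ?addr0; last first.
  by move=> t; rewrite mem_index_iota => /and3P[_ ct _]; rewrite (leqNgt t c) ct andbF.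
rewrite -{1}(add0n r) big_addn subSn // big_mkord; apply: eq_bigr => i _.
by rewrite leq_addl addnC -leq_subRL // -ltnS ltn_ord.
Qed.

Definition upper_toeplitz (k : nat) (p : nat -> K) : 'M[K]_k :=
  \matrix_(r < k, c < k) if (r <= c)%N then p (c - r)%N else 0.

Definition lower_toeplitz (k : nat) (p : nat -> K) : 'M[K]_k :=
  \matrix_(r < k, c < k) if (c <= r)%N then p (r - c)%N else 0.

Definition top_coef_mx (k d : nat) (P : {poly K}) : 'M[K]_k :=
  \matrix_(r < k, c < k) P`_(d + c - r).

Lemma det_upper_toeplitz k p : \det (upper_toeplitz k p) = p 0%N ^+ k.
Proof.
rewrite -det_tr det_trig; last first.
  by apply/is_trig_mxP => i j ij; rewrite !mxE leqNgt ij.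
rewrite (eq_bigr (fun _ => p 0%N)) ?prodr_const ?card_ord // => i _.
by rewrite !mxE leqnn subnn.
Qed.

Lemma det_top_coef_mx k d (P : {poly K}) :
  (size P <= d.+1)%N -> \det (top_coef_mx k d P) = P`_d ^+ k.
Proof.
move=> sP; rewrite det_trig; last first.
  apply/is_trig_mxP => i j ij; rewrite !mxE nth_default //.
  by apply: leq_trans sP _; lia.
rewrite (eq_bigr (fun _ => P`_d)) ?prodr_const ?card_ord // => i _.
by rewrite !mxE addnK.
Qed.

Lemma sylv0_row (P : {poly K}) d k (a : 'I_k) (c : 'I_(k + k)) :
  (1 <= k <= d)%N ->
  (if (c.+1 < k)%N then coefz P (c%:Z - a%:Z)
   else if c == k.-1 :> nat then coefz P (k%:Z - 1 - a%:Z + 0%:Z)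
   else coefz P (d%:Z + c%:Z - k%:Z - a%:Z)) =
  row_mx (upper_toeplitz k (nth 0 P)) (top_coef_mx k d P) a c.
Proof.
move=> /andP[k1 kd]; rewrite -(splitK c); case: (split c) => b /=.
- rewrite row_mxEl !mxE; case: ifP => bk; first by rewrite coefz_subn.
  have -> : b == k.-1 :> nat by apply/eqP; move: (ltn_ord b) bk; clear; lia.
  have -> : k%:Z - 1 - a%:Z + 0%:Z = b%:Z - a%:Z.
    by move: (ltn_ord b) bk; clear; lia.
  by rewrite coefz_subn.
- rewrite row_mxEr !mxE.
  have -> : ((k + b).+1 < k)%N = false by clear; lia.
  have -> : (k + b == k.-1 :> nat) = false by move: k1; clear; lia.
  have -> : d%:Z + (k + b)%:Z - k%:Z - a%:Z = (d + b)%:Z - a%:Z by clear; lia.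
  by rewrite coefz_subn ifT //; move: (ltn_ord a) kd; clear; lia.
Qed.

Lemma sylv0_block (F G : {poly K}) d k : (1 <= k <= d)%N ->
  sylv F G d k 0 =
  block_mx (upper_toeplitz k (nth 0 F)) (top_coef_mx k d F)
           (upper_toeplitz k (nth 0 G)) (top_coef_mx k d G).
Proof.
move=> kd; apply/matrixP => i j; rewrite /block_mx -(splitK i).
case: (split i) => a /=; rewrite ?col_mxEu ?col_mxEd -sylv0_row // !mxE /=.
  by rewrite ltn_ord.
have -> : (k + a < k)%N = false by clear; lia.
by rewrite addKn.
Qed.

Lemma upper_toeplitz_expansion0 (F G : {poly K}) s k : expansion0 F G s ->
  upper_toeplitz k (nth 0 G) = upper_toeplitz k s *m upper_toeplitz k (nth 0 F).
Proof.
move=> e0; apply/matrixP => r c; rewrite !mxE.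
case: leqP => rc; last first.
  rewrite big1 // => t _; rewrite !mxE.
  by case: (leqP r t); case: (leqP t c) => //= *; rewrite ?mulr0 ?mul0r //; lia.
rewrite (eq_bigr (fun t : 'I_k =>
    if (r <= t <= c)%N then s (t - r)%N * F`_(c - t) else 0)); last first.
  move=> t _; rewrite !mxE.
  by case: (leqP r t); case: (leqP t c) => //= *; rewrite ?mulr0 ?mul0r.
rewrite (@sum_ord_window (fun t => s (t - r)%N * F`_(c - t))); last by rewrite rc ltn_ord.
rewrite -e0 (reindex_inj rev_ord_inj) /=; apply: eq_bigr => j _.
by rewrite mulrC; congr (s _ * nth _ _ _); move: (ltn_ord j) rc; clear; lia.
Qed.

Lemma top_coef_mx_expansion_inf (F G : {poly K}) w d k :
    size F = d.+1 -> (size G <= size F)%N -> (k <= d)%N ->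
  expansion_inf F G w ->
  top_coef_mx k d G = lower_toeplitz k w *m top_coef_mx k d F.
Proof.
move=> sF sG kd [ei _]; apply/matrixP => r m; rewrite !mxE.
case: (leqP m r) => mr; last first.
  rewrite big1 => [|t _].
    by rewrite nth_default //; apply: leq_trans sG _; rewrite sF; lia.
  rewrite !mxE; case: (leqP t r) => tr; last by rewrite mul0r.
  by rewrite nth_default ?mulr0 // sF; move: (ltn_ord r) kd mr tr; clear; lia.
rewrite (eq_bigr (fun t : 'I_k =>
    if (m <= t <= r)%N then w (r - t)%N * F`_(d + m - t) else 0)); last first.
  move=> t _; rewrite !mxE.
  case: (leqP t r); case: (leqP m t) => //= *; rewrite ?mul0r //.
  by rewrite nth_default ?mulr0 // sF; lia.
rewrite (@sum_ord_window (fun t => w (r - t)%N * F`_(d + m - t))); last by rewrite mr ltn_ord.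
have top : (d + m - r < size F)%N by rewrite sF; move: (ltn_ord r) kd mr; clear; lia.
rewrite -(ei _ top) -{1}(add0n (d + m - r)%N) big_addn big_mkord.
have -> : (size F - (d + m - r) = (r - m).+1)%N.
  by rewrite sF; move: (ltn_ord r) kd mr; clear; lia.
rewrite (reindex_inj rev_ord_inj) /=; apply: eq_bigr => j _.
by rewrite mulrC; congr (w _ * nth _ _ _);
  move: (ltn_ord j) (ltn_ord r) kd mr; clear; lia.
Qed.

Lemma lower_sub_upper_toeplitz k (s w : nat -> K) :
  lower_toeplitz k w - upper_toeplitz k s = - toeplitzFG s w k.
Proof.
apply/matrixP => i j; rewrite !mxE.
case: (ltngtP i j) => ij; first by rewrite sub0r.
  by rewrite subr0 opprK.
by rewrite ij subnn opprD opprK.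
Qed.

Lemma subres_horner0 (F G : {poly K}) d k :
  (subres F G d k).[0] = \det (sylv F G d k 0).
Proof.
rewrite /subres horner_sum big_ord_recl big1 => [|l _]; last first.
  by rewrite hornerZ hornerXn expr0n /= mulr0.
by rewrite addr0 hornerZ hornerXn expr0 mulr1.
Qed.

End SylvesterMatrix.

Theorem proposition11 (R : realType) (F G : {poly R[i]}) (s w : nat -> R[i]) :
  let d := (size F).-1 in
  (1 <= d)%N ->
  (size G <= size F)%N ->
  G != 0 ->
  pval F = pval G ->
  expansion0 F G s ->
  expansion_inf F G w ->
  forall k : nat, (1 <= k <= d)%N ->
    (subres F G d k).[0] =
      (-1) ^+ k * F`_0 ^+ k * F`_d ^+ k * \det (toeplitzFG s w k).
Proof.
(* The identity holds whenever both expansions exist. *)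
move=> d d1 sG _ _ e0 ei k kd.
have sF : size F = d.+1 by rewrite /d prednK //; lia.
rewrite subres_horner0 sylv0_block // (upper_toeplitz_expansion0 _ e0).
rewrite (top_coef_mx_expansion_inf sF sG _ ei); last by case/andP: kd.
rewrite det_block_mulmx lower_sub_upper_toeplitz -scaleN1r detZ.
rewrite det_upper_toeplitz det_top_coef_mx -?sF //; ring.
Qed.
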